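(* Let $A$ be a commutative semiring, $\rho$ a congruence on $A$, $(a,b),(c,d)\in A\times A$, and $c=z_1,z_2,\dots,z_n=d$ ($n\ge2$) a sequence of elements of $A$. If $(a,b)\ast(z_i,z_{i+1})\in\rho_+$ for all $i\in\{1,\dots,n-1\}$, then $(a,b)\ast(c,d)\in\rho_+$.
   Context: Semirings are commutative with $0$ and $1\neq0$, $0a=0$; congruences are equivalence relations compatible with $+,\cdot$. Twisted product $(a,b)\ast(c,d)=(ac+bd,ad+bc)$. $\rho_+=\{(u,v):(u+e,v+e)\in\rho$ for some $e\in A\}$. *)

From HB Require Import structures.
From mathcomp Require Import all_boot all_algebra.
Set Implicit Arguments. Unset Strict Implicit. Unset Printing Implicit Defensive.
Import GRing.Theory.
Local Open Scope ring_scope.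

Definition congruence (A : comNzSemiRingType) (rho : A -> A -> Prop) : Prop :=
  [/\ (forall x, rho x x),
      (forall x y, rho x y -> rho y x),
      (forall x y z, rho x y -> rho y z -> rho x z),
      (forall x y u v, rho x y -> rho u v -> rho (x + u) (y + v)) &
      (forall x y u v, rho x y -> rho u v -> rho (x * u) (y * v))].

Definition twisted (A : comNzSemiRingType) (p q : A * A) : A * A :=
  (p.1 * q.1 + p.2 * q.2, p.1 * q.2 + p.2 * q.1).

Definition rho_plus (A : comNzSemiRingType) (rho : A -> A -> Prop) (p : A * A) : Prop :=
  exists e : A, rho (p.1 + e) (p.2 + e).

From mathcomp Require Import all_boot all_algebra.
From mathcomp Require Import ring.
Import GRing.Theory.
Local Open Scope ring_scope.

(* For fixed (a, b), the relation x ~ y :<-> (a, b) * (x, y) \in rho_+ is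
   reflexive (take e = 0) and transitive: adding the two witnesses, the middle
   terms a y + b y occur on both sides and are absorbed into the new witness.
   Hence z_0 ~ z_(n-1) along the chain. *)

Section TwistedRhoPlus.

Variables (A : comNzSemiRingType) (rho : A -> A -> Prop) (a b : A).
Hypothesis rho_cong : congruence rho.

Definition twisted_rel (x y : A) : Prop := rho_plus rho (twisted (a, b) (x, y)).

Lemma twisted_rel_refl (x : A) : twisted_rel x x.
Proof.
case: rho_cong => rho_refl _ _ _ _.
by exists 0; rewrite /twisted /= (addrC (a * x)).
Qed.

Lemma twisted_rel_trans (x y w : A) :
  twisted_rel x y -> twisted_rel y w -> twisted_rel x w.
Proof.
case: rho_cong => _ _ _ rhoD _ [e He] [f Hf].
exists (b * y + a * y + e + f); move: (rhoD _ _ _ _ He Hf); rewrite /twisted /=.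
have -> : a * x + b * y + e + (a * y + b * w + f)
          = a * x + b * w + (b * y + a * y + e + f) by ring.
have -> : a * y + b * x + e + (a * w + b * y + f)
          = a * w + b * x + (b * y + a * y + e + f) by ring.
by [].
Qed.

Lemma twisted_rel_chain (z : nat -> A) (m : nat) :
  (forall i, (i < m)%N -> twisted_rel (z i) (z i.+1)) ->
  twisted_rel (z 0%N) (z m).
Proof.
elim: m => [|m IHm] steps; first exact: twisted_rel_refl.
apply: twisted_rel_trans (steps m (ltnSn m)).
by apply: IHm => i lt_im; apply: steps; rewrite ltnS ltnW.
Qed.

End TwistedRhoPlus.

Theorem lemma2p22 (A : comNzSemiRingType) (rho : A -> A -> Prop)
  (a b c d : A) (n : nat) (z : nat -> A) :
  congruence rho -> (2 <= n)%N ->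
  z 0%N = c -> z n.-1 = d ->
  (forall i : nat, (i < n.-1)%N -> rho_plus rho (twisted (a, b) (z i, z i.+1))) ->
  rho_plus rho (twisted (a, b) (c, d)).
Proof.
move=> rho_cong _ <- <- steps.
exact: (@twisted_rel_chain A rho a b rho_cong z n.-1 steps).
Qed.
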